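(* Let $0\le q<\tfrac12$ and $p=1-q$. Let $X_1,X_2,\dots$ be i.i.d. letters in $\{S,H\}$ with $\mathbb{P}[X_i=S]=q$ and $\mathbb{P}[X_i=H]=p$. Define the random variable $L$ as follows: (i) if $X_1=H$, then $L=1$; (ii) if $X_1X_2=SH$, then $L=2$; (iii) if $X_1X_2=SS$, let $m\ge 3$ be the first index with $X_m=H$ and (number of $S$ among $X_1,\dots,X_m$) $-$ (number of $H$ among $X_1,\dots,X_m$) $=1$, and let $L$ be the number of letters $S$ among $X_1,\dots,X_m$. Then $$\mathbb{E}[L]=1+\frac{p^2q}{p-q}.$$
   Context: This models one attack cycle of the Selfish Mining strategy in Bitcoin: each newly validated block is found by the selfish miner (letter $S$, relative hashrate $q$) or by the honest miners (letter $H$, relative hashrate $p$), independently, and $L$ is the number of blocks added to the official blockchain during the attack cycle. *)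

From HB Require Import structures.
From mathcomp Require Import all_boot all_order all_algebra.
From mathcomp Require Import all_classical all_reals all_analysis.
Set Implicit Arguments. Unset Strict Implicit. Unset Printing Implicit Defensive.
Import Order.TTheory GRing.Theory Num.Theory.
Import numFieldNormedType.Exports.
Local Open Scope ring_scope.

(* A finite word of letters: [true] = S (selfish), [false] = H (honest). *)
Definition nS (w : seq bool) : nat := count id w.
Definition nH (w : seq bool) : nat := count negb w.

(* Index m (1-based, m = k) satisfies the rule of case (iii):
   m >= 3, X_m = H, and #S - #H = 1 among X_1..X_m. *)
Definition case3_cond (w : seq bool) (k : nat) : bool :=
  [&& (3 <= k)%N, nth true w k.-1 == false & nS (take k w) == (nH (take k w)).+1].

(* [is_stop w] holds iff the random prefix X_1..X_n equal to w (n = size w)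
   is exactly the prefix read when the attack cycle ends, i.e. the stopping
   time equals n and its value is determined by w. *)
Definition is_stop (w : seq bool) : bool :=
  match w with
  | [:: false] => true
  | [:: true; false] => true
  | true :: true :: _ =>
      case3_cond w (size w) && all (fun k => ~~ case3_cond w k) (iota 1 (size w).-1)
  | _ => false
  end.

Definition L_of (w : seq bool) : nat :=
  match w with
  | [:: false] => 1%N
  | [:: true; false] => 2%N
  | _ => nS w
  end.

Definition word_prob {R : realType} (q p : R) (w : seq bool) : R :=
  q ^+ nS w * p ^+ nH w.

(* Contribution to E[L] of the event {stopping time = n}. *)
Definition EL_term {R : realType} (q p : R) (n : nat) : R :=
  \sum_(w : n.-tuple bool | is_stop w) word_prob q p w * (L_of w)%:R.

(* After the prefix SS, the stopping rule of case (iii) is the first passage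
   to 0 of the walk that starts at height 1 and moves up on S (probability q)
   and down on H (probability p > q). Summing E[L] over the stopping time T,
   each partial sum equals 1 + p^2 q / (p - q) minus a tail built from
   P[T >= N], the height at time N and the number of S letters on {T >= N};
   this is exact by total probability and optional stopping for the
   martingale (p - q) #S + q height. The tail vanishes: z ^ height is a
   supermartingale with ratio q z + p / z < 1 for z = 2 p, so P[T >= N]
   decays geometrically, while height and #S grow at most linearly in N. *)

From HB Require Import structures.
From mathcomp Require Import all_boot all_order all_algebra.
From mathcomp Require Import all_classical all_reals all_analysis.
From mathcomp Require Import zify ring lra.
Import Order.TTheory GRing.Theory Num.Theory.
Import numFieldNormedType.Exports.
Local Open Scope classical_set_scope.
Local Open Scope ring_scope.

Lemma big_tuple0 (R : Type) (idx : R) (op : Monoid.law idx) (T : finType)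
    (P : pred (0.-tuple T)) (F : 0.-tuple T -> R) :
  \big[op/idx]_(t | P t) F t = if P [tuple] then F [tuple] else idx.
Proof.
by rewrite big_mkcond (big_pred1 [tuple]) // => t; apply/esym/eqP/tuple0.
Qed.

Lemma big_tuple_cons (R : Type) (idx : R) (op : Monoid.com_law idx)
    (T : finType) n (P : pred (n.+1.-tuple T)) (F : n.+1.-tuple T -> R) :
  \big[op/idx]_(t | P t) F t =
  \big[op/idx]_(x : T) \big[op/idx]_(t : n.-tuple T | P [tuple of x :: t])
     F [tuple of x :: t].
Proof.
rewrite pair_big_dep.
rewrite (reindex (fun t : n.+1.-tuple T => (thead t, [tuple of behead t]))) /=.
  by apply: eq_big => [t|t _]; rewrite -tuple_eta.
exists (fun xt : T * n.-tuple T => [tuple of xt.1 :: xt.2]) => [t _ | [x t] _].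
  by rewrite -tuple_eta.
by rewrite theadE; congr pair; apply: val_inj.
Qed.

Lemma natr_mul_expr_le (R : realDomainType) (a b : R) n : 0 <= a <= b ->
  n.+1%:R * (b - a) * a ^+ n <= b ^+ n.+1.
Proof.
case/andP=> a_ge0 a_le_b; have b_ge0 := le_trans a_ge0 a_le_b.
elim: n => [|n IH]; first by rewrite mul1r expr0 mulr1 expr1; lra.
have an_le_bn : a ^+ n.+1 <= b ^+ n.+1 by apply: lerXn2r; rewrite ?nnegrE.
have ba_ge0 : 0 <= b - a by rewrite subr_ge0.
have := ler_wpM2l a_ge0 IH; have := ler_wpM2l ba_ge0 an_le_bn.
rewrite -(natr1 n.+1) [b ^+ n.+2]exprS [a ^+ n.+1]exprS; nra.
Qed.

Lemma nS_cat v w : nS (v ++ w) = (nS v + nS w)%N.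
Proof. exact: count_cat. Qed.

Lemma nH_cat v w : nH (v ++ w) = (nH v + nH w)%N.
Proof. exact: count_cat. Qed.

Lemma case3_cond_cat v w k : (0 < k <= size v)%N ->
  case3_cond (v ++ w) k = case3_cond v k.
Proof.
case/andP=> k_gt0 k_le; rewrite /case3_cond nth_cat takel_cat // ifT //.
by case: k k_gt0 k_le.
Qed.

(* After the prefix SS of case (iii),
   the height is #S - #H - 1, so reaching 0 is the stopping rule. *)
Fixpoint first_passage (h : nat) (w : seq bool) : bool :=
  if w is b :: w' then (h != 0%N) && first_passage (if b then h.+1 else h.-1) w'
  else h == 0%N.

Lemma case3_cond_sizeF {v h} : nS v = (nH v + h.+2)%N ->
  case3_cond v (size v) = false.
Proof.
move=> eSH; rewrite /case3_cond take_size eSH.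
by case: eqP; rewrite ?andbF //; lia.
Qed.

Lemma case3_cond_first_passage w v h :
    (2 <= size v)%N -> nS v = (nH v + h.+2)%N ->
  case3_cond (v ++ w) (size (v ++ w)) &&
    all (fun k => ~~ case3_cond (v ++ w) k) (iota (size v) (size w))
  = first_passage h.+1 w.
Proof.
elim: w v h => [|b w IH] v h v_ge2 eSH.
  by rewrite cats0 (case3_cond_sizeF eSH).
have eSH_vb :
    nS (rcons v b) = (nH (rcons v b) + (if b then h.+3 else h.+1))%N.
  by rewrite -cats1 nS_cat nH_cat eSH; case: b => /=; lia.
have size_vb : size (rcons v b) = (size v).+1 by rewrite size_rcons.
rewrite /= (case3_cond_cat v (b :: w) (size v)) ?(case3_cond_sizeF eSH) /=;
  last by lia.
rewrite -cat_rcons.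
case: b size_vb eSH_vb => /= size_vb eSH_vb.
  by rewrite -(IH (rcons v true) h.+1) ?size_vb // ltnW.
case: h {eSH} eSH_vb => [|h] eSH_vb; last first.
  by rewrite -(IH (rcons v false) h) ?size_vb // ltnW.
have stop_vb : case3_cond (rcons v false ++ w) (size v).+1.
  rewrite case3_cond_cat ?size_vb ?ltnSn ?andbT //.
  rewrite /case3_cond -size_vb take_size size_vb ltnS v_ge2 nth_rcons ltnn eqxx.
  by rewrite eSH_vb addn1 !eqxx.
case: w {IH} stop_vb => [|x w] /=; first by rewrite !cats0 size_vb => ->.
by move=> ->; rewrite andbF.
Qed.

Lemma is_stop_SS u : is_stop [:: true, true & u] = first_passage 1 u.
Proof. exact: (case3_cond_first_passage u [:: true; true] 0). Qed.

Section FirstPassage.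
Context {R : realType} (q p : R).

Lemma word_prob_nil : word_prob q p [::] = 1.
Proof. by rewrite /word_prob !expr0 mulr1. Qed.

Lemma word_probS w : word_prob q p (true :: w) = q * word_prob q p w.
Proof. by rewrite /word_prob /nS /nH /= exprS mulrA. Qed.

Lemma word_probH w : word_prob q p (false :: w) = p * word_prob q p w.
Proof. by rewrite /word_prob /nS /nH /= exprS mulrCA. Qed.

Definition hit_prob n h : R :=
  \sum_(w : n.-tuple bool | first_passage h w) word_prob q p w.

Definition hit_nS n h : R :=
  \sum_(w : n.-tuple bool | first_passage h w) word_prob q p w * (nS w)%:R.

Lemma hit_prob0 h : hit_prob 0 h = (h == 0%N)%:R.
Proof. by rewrite /hit_prob big_tuple0 /=; case: eqP; rewrite ?word_prob_nil. Qed.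

Lemma hit_prob_S0 n : hit_prob n.+1 0 = 0.
Proof. by rewrite /hit_prob big_tuple_cons big_bool /= !big_pred0_eq addr0. Qed.

Lemma hit_prob_SS n h :
  hit_prob n.+1 h.+1 = q * hit_prob n h.+2 + p * hit_prob n h.
Proof.
rewrite /hit_prob big_tuple_cons big_bool /= !mulr_sumr.
by congr (_ + _); apply: eq_bigr => w _; rewrite ?word_probS ?word_probH.
Qed.

Lemma hit_nS0 h : hit_nS 0 h = 0.
Proof. by rewrite /hit_nS big_tuple0 /= mulr0; case: ifP. Qed.

Lemma hit_nS_S0 n : hit_nS n.+1 0 = 0.
Proof. by rewrite /hit_nS big_tuple_cons big_bool /= !big_pred0_eq addr0. Qed.

Lemma hit_nS_SS n h :
  hit_nS n.+1 h.+1 = q * (hit_nS n h.+2 + hit_prob n h.+2) + p * hit_nS n h.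
Proof.
rewrite /hit_nS /hit_prob big_tuple_cons big_bool /= -big_split !mulr_sumr.
congr (_ + _); apply: eq_bigr => w _.
  by rewrite word_probS /nS /= -/(nS w) -natr1; ring.
by rewrite word_probH /nS /= mulrA.
Qed.

Definition hit_prob_before N h : R := \sum_(n < N) hit_prob n h.
Definition hit_nS_before N h : R := \sum_(n < N) hit_nS n h.

Lemma hit_prob_before_S0 N : hit_prob_before N.+1 0 = 1.
Proof.
rewrite /hit_prob_before big_ord_recl hit_prob0 big1 ?addr0 // => n _.
exact: hit_prob_S0.
Qed.

Lemma hit_prob_before_SS N h : hit_prob_before N.+1 h.+1 =
  q * hit_prob_before N h.+2 + p * hit_prob_before N h.
Proof.
rewrite /hit_prob_before big_ord_recl hit_prob0 add0r !mulr_sumr -big_split.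
by apply: eq_bigr => n _; rewrite hit_prob_SS.
Qed.

Lemma hit_nS_before_S0 N : hit_nS_before N.+1 0 = 0.
Proof.
rewrite /hit_nS_before big_ord_recl hit_nS0 big1 ?addr0 // => n _.
exact: hit_nS_S0.
Qed.

Lemma hit_nS_before_SS N h : hit_nS_before N.+1 h.+1 =
  q * (hit_nS_before N h.+2 + hit_prob_before N h.+2) + p * hit_nS_before N h.
Proof.
rewrite /hit_nS_before /hit_prob_before big_ord_recl hit_nS0 add0r.
rewrite -big_split !mulr_sumr -big_split.
by apply: eq_bigr => n _; rewrite hit_nS_SS.
Qed.

Lemma L_of_SS u : L_of [:: true, true & u] = (nS u).+2.
Proof. by []. Qed.

Lemma EL_term0 : EL_term q p 0 = 0.
Proof. by rewrite /EL_term big_tuple0. Qed.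

Lemma EL_term1 : EL_term q p 1 = p.
Proof.
rewrite /EL_term big_tuple_cons big_bool !big_tuple0 /=.
by rewrite word_probH word_prob_nil add0r !mulr1.
Qed.

Lemma EL_term_sum_SS n :
  \sum_(t : n.-tuple bool | is_stop [:: true, true & t])
     word_prob q p [:: true, true & t] * (L_of [:: true, true & t])%:R =
  q ^+ 2 * (2 * hit_prob n 1 + hit_nS n 1).
Proof.
rewrite (eq_bigl _ _ (fun t : n.-tuple bool => is_stop_SS t)) /hit_prob /hit_nS.
rewrite mulr_sumr -big_split mulr_sumr; apply: eq_bigr => t _.
by rewrite L_of_SS !word_probS -addn2 natrD /=; ring.
Qed.

Lemma EL_term_sum_SH n :
  \sum_(t : n.-tuple bool | is_stop [:: true, false & t])
     word_prob q p [:: true, false & t] * (L_of [:: true, false & t])%:R =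
  (n == 0%N)%:R * (2 * q * p).
Proof.
case: n => [|n].
  by rewrite big_tuple0 /= word_probS word_probH word_prob_nil mul1r; ring.
by rewrite mul0r; apply: big_pred0 => -[[|x w]].
Qed.

Lemma EL_term_sum_H b n :
  \sum_(t : n.-tuple bool | is_stop [:: false, b & t])
     word_prob q p [:: false, b & t] * (L_of [:: false, b & t])%:R = 0.
Proof. exact: big_pred0. Qed.

Lemma EL_termSS n : EL_term q p n.+2 =
  (n == 0%N)%:R * (2 * q * p) + q ^+ 2 * (2 * hit_prob n 1 + hit_nS n 1).
Proof.
rewrite /EL_term big_tuple_cons big_bool !big_tuple_cons !big_bool.
by rewrite EL_term_sum_SS EL_term_sum_SH !EL_term_sum_H /= !addr0 addrC.
Qed.

(* For the walk of [first_passage] started at [h] and stopped at its first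
   passage time T: P[T >= N], E[height after N steps; T >= N], and
   E[#S among the first N letters; T >= N]. *)
Fixpoint tail_prob N h : R :=
  if N is N'.+1 then
    if h is h'.+1 then q * tail_prob N' h'.+2 + p * tail_prob N' h' else 0
  else 1.

Fixpoint tail_height N h : R :=
  if N is N'.+1 then
    if h is h'.+1 then q * tail_height N' h'.+2 + p * tail_height N' h' else 0
  else h%:R.

Fixpoint tail_nS N h : R :=
  if N is N'.+1 then
    if h is h'.+1 then
      q * (tail_nS N' h'.+2 + tail_prob N' h'.+2) + p * tail_nS N' h'
    else 0
  else 0.

Hypothesis pq1 : p + q = 1.

Lemma hit_prob_before_tail N h : hit_prob_before N h + tail_prob N h = 1.
Proof.
elim: N h => [|N IH] h; first by rewrite /hit_prob_before big_ord0 add0r.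
case: h => [|h]; first by rewrite hit_prob_before_S0 addr0.
rewrite hit_prob_before_SS /=.
transitivity (q * (hit_prob_before N h.+2 + tail_prob N h.+2) +
              p * (hit_prob_before N h + tail_prob N h)); first ring.
by rewrite !IH !mulr1 addrC.
Qed.

(* Optional stopping at min(T, N) for the martingale (p - q) #S + q height. *)
Lemma hit_nS_before_tail N h :
  (p - q) * (hit_nS_before N h + tail_nS N h) = q * (h%:R - tail_height N h).
Proof.
elim: N h => [|N IH] h.
  by rewrite /hit_nS_before big_ord0 add0r !subrr !mulr0.
case: h => [|h]; first by rewrite hit_nS_before_S0 addr0 subrr !mulr0.
rewrite hit_nS_before_SS /=.
transitivity
  (q * ((p - q) * (hit_nS_before N h.+2 + tail_nS N h.+2)) +
   p * ((p - q) * (hit_nS_before N h + tail_nS N h)) +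
   (p - q) * q * (hit_prob_before N h.+2 + tail_prob N h.+2)); first ring.
rewrite !IH hit_prob_before_tail -!natr1.
have -> : p = 1 - q by rewrite -pq1 addrK.
ring.
Qed.

Hypotheses (q_ge0 : 0 <= q) (p_ge0 : 0 <= p).

Lemma tail_prob_ge0 N h : 0 <= tail_prob N h.
Proof. by elim: N h => [|N IH] [|h] //=; rewrite addr_ge0 ?mulr_ge0. Qed.

Lemma tail_height_ge0 N h : 0 <= tail_height N h.
Proof. by elim: N h => [|N IH] [|h] //=; rewrite addr_ge0 ?mulr_ge0. Qed.

Lemma tail_nS_ge0 N h : 0 <= tail_nS N h.
Proof.
elim: N h => [|N IH] [|h] //=.
by rewrite addr_ge0 ?mulr_ge0 ?addr_ge0 ?tail_prob_ge0.
Qed.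

(* Each step multiplies the expectation of z ^ height by q z + p / z. *)
Lemma tail_prob_le_geometric z N h : 1 <= z ->
  tail_prob N h <= z ^+ h * (q * z + p / z) ^+ N.
Proof.
move=> z_ge1; have z_gt0 : 0 < z by apply: lt_le_trans z_ge1.
have a_ge0 : 0 <= q * z + p / z.
  by apply: addr_ge0; [apply: mulr_ge0 | apply: divr_ge0]; rewrite // ltW.
elim: N h => [|N IH] [|h] /=.
- by rewrite !expr0 mulr1.
- by rewrite expr0 mulr1 exprn_ege1.
- by rewrite expr0 mul1r exprn_ge0.
have -> : z ^+ h.+1 * (q * z + p / z) ^+ N.+1 =
    q * (z ^+ h.+2 * (q * z + p / z) ^+ N) +
    p * (z ^+ h * (q * z + p / z) ^+ N).
  by rewrite !exprS; field; rewrite gt_eqF.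
exact: lerD (ler_wpM2l q_ge0 (IH h.+2)) (ler_wpM2l p_ge0 (IH h)).
Qed.

Lemma tail_height_le N h : tail_height N h <= (h + N)%:R * tail_prob N h.
Proof.
elim: N h => [|N IH] [|h] /=; rewrite ?addn0 ?mulr1 ?mulr0 //.
have := ler_wpM2l q_ge0 (IH h.+2); have := ler_wpM2l p_ge0 (IH h).
have := mulr_ge0 p_ge0 (tail_prob_ge0 N h).
rewrite !natrD -!natr1; nra.
Qed.

Lemma tail_nS_le N h : tail_nS N h <= N%:R * tail_prob N h.
Proof.
elim: N h => [|N IH] [|h] /=; rewrite ?mul0r ?mulr0 //.
have := ler_wpM2l q_ge0 (IH h.+2); have := ler_wpM2l p_ge0 (IH h).
have := mulr_ge0 p_ge0 (tail_prob_ge0 N h).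
rewrite -natr1; nra.
Qed.

Hypothesis q_lt_p : q < p.

Definition EL_tail N : R :=
  q ^+ 2 * (2 * tail_prob N 1 + q / (p - q) * tail_height N 1 + tail_nS N 1).

Lemma EL_partial_sum N :
  \sum_(n < N.+3) EL_term q p n = 1 + p ^+ 2 * q / (p - q) - EL_tail N.+1.
Proof.
rewrite big_ord_recl EL_term0 add0r big_ord_recl EL_term1.
under eq_bigr do rewrite /bump /= EL_termSS.
rewrite big_split /= big_ord_recl /= mul1r big1 ?addr0; last first.
  by move=> n _; rewrite mul0r.
rewrite -mulr_sumr big_split /= -mulr_sumr.
rewrite -/(hit_prob_before _ _) -/(hit_nS_before _ _).
have pq_neq0 : p - q != 0 by rewrite subr_eq0 gt_eqF.
have -> : hit_prob_before N.+1 1 = 1 - tail_prob N.+1 1.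
  by rewrite -(hit_prob_before_tail N.+1 1) addrK.
have -> : hit_nS_before N.+1 1 =
    q * (1 - tail_height N.+1 1) / (p - q) - tail_nS N.+1 1.
  by rewrite -[1]mulr1n -hit_nS_before_tail mulrC mulKf ?addrK.
have hp : p = 1 - q by rewrite -pq1 addrK.
rewrite /EL_tail hp; field; by rewrite -hp.
Qed.

Lemma EL_tail_ge0 N : 0 <= EL_tail N.
Proof.
have c_ge0 : 0 <= q / (p - q) by rewrite divr_ge0 // subr_ge0 ltW.
apply: mulr_ge0; first exact: exprn_ge0.
apply: addr_ge0; last exact: tail_nS_ge0.
by apply: addr_ge0; apply: mulr_ge0; rewrite ?tail_prob_ge0 ?tail_height_ge0.
Qed.

Lemma EL_tail_le N :
  EL_tail N <= q ^+ 2 * ((3 + q / (p - q)) * (N.+1%:R * tail_prob N 1)).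
Proof.
have c_ge0 : 0 <= q / (p - q) by rewrite divr_ge0 // subr_ge0 ltW.
rewrite /EL_tail; apply: ler_wpM2l; first exact: exprn_ge0.
have := tail_height_le N 1; have := tail_nS_le N 1; rewrite add1n.
have := tail_prob_ge0 N 1; have := ler0n R N.
move: (q / (p - q)) c_ge0 => c c_ge0 N_ge0 tp_ge0 tn_le th_le.
rewrite -natr1; nra.
Qed.

Lemma natr_mul_tail_prob_le : exists2 b : R, 0 <= b < 1 &
  exists C : R, forall N, N.+1%:R * tail_prob N 1 <= C * b ^+ N.
Proof.
have [z z_ge1 /andP[a_ge0 a_lt1]] :
    exists2 z : R, 1 <= z & 0 <= q * z + p / z < 1.
  have p_gt0 : 0 < p by apply: le_lt_trans q_lt_p.
  exists (2 * p); first by move: pq1 q_lt_p; lra.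
  have -> : q * (2 * p) + p / (2 * p) = 2 * (p * q) + 2^-1.
    by field; rewrite gt_eqF.
  have : 0 < (p - q) * (p - q) by rewrite mulr_gt0 ?subr_gt0.
  have -> : (p - q) * (p - q) = (p + q) * (p + q) - 4 * (p * q) by ring.
  have := mulr_ge0 p_ge0 q_ge0; rewrite pq1 mulr1; lra.
have tp_le N : tail_prob N 1 <= z * (q * z + p / z) ^+ N.
  by have := tail_prob_le_geometric z N 1 z_ge1; rewrite expr1.
move: (q * z + p / z) a_ge0 a_lt1 tp_le => a a_ge0 a_lt1 tp_le.
exists ((1 + a) / 2); first by apply/andP; split; lra.
exists (z / ((1 + a) / 2 - a) * ((1 + a) / 2)) => N.
rewrite -mulrA -exprS.
apply: le_trans (ler_wpM2l (ler0n _ _) (tp_le N)) _.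
rewrite mulrCA -mulrA; apply: ler_wpM2l; first by lra.
rewrite ler_pdivlMl ?subr_gt0; last by lra.
by rewrite mulrCA mulrA natr_mul_expr_le // a_ge0; lra.
Qed.

Lemma cvg_EL_tail : EL_tail @ \oo --> 0.
Proof.
have [b /andP[b_ge0 b_lt1] [C tp_le]] := natr_mul_tail_prob_le.
apply: (@squeeze_cvgr _ _ _ _ (cst 0)
  (geometric (q ^+ 2 * ((3 + q / (p - q)) * C)) b)); last 2 first.
- exact: cvg_cst.
- by apply: cvg_geometric; rewrite ger0_norm.
apply: nearW => N; rewrite /= EL_tail_ge0 /=.
apply: le_trans (EL_tail_le N) _; rewrite -!mulrA.
do 2 apply: ler_wpM2l => //.
apply: ler_wpM2l; last exact: tp_le.
by rewrite addr_ge0 ?divr_ge0 // subr_ge0 ltW.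
Qed.

End FirstPassage.

Theorem mainTheorem2 (R : realType) (q p : R)
  (hq0 : 0 <= q) (hq1 : q < 1 / 2) (hp : p = 1 - q) :
  (fun N : nat => \sum_(n < N) EL_term q p n) @ \oo --> (1 + p ^+ 2 * q / (p - q)).
Proof.
have pq1 : p + q = 1 by rewrite hp subrK.
have q_lt_p : q < p by rewrite hp; lra.
have p_ge0 : 0 <= p by rewrite hp; lra.
rewrite -(cvg_shiftn 3).
have -> : [sequence \sum_(n < N + 3) EL_term q p n]_N =
    (fun N => 1 + p ^+ 2 * q / (p - q) - EL_tail q p N.+1).
  by apply: funext => N /=; rewrite addn3 EL_partial_sum.
have tail_cvg : (fun N => EL_tail q p N.+1) @ \oo --> 0.
  rewrite (cvg_shiftS (EL_tail q p)).
  exact: cvg_EL_tail pq1 hq0 p_ge0 q_lt_p.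
have := cvgB (cvg_cst (1 + p ^+ 2 * q / (p - q))) tail_cvg.
by rewrite subr0 => lim; exact: lim.
Qed.
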